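(* Let $\mathbf G$ and $\mathbf H$ be power-associative loops. Then $\mathcal G^+(\mathbf G)\cong\mathcal G^+(\mathbf H)$ if and only if $\mathcal G^\pm(\mathbf G)\cong\mathcal G^\pm(\mathbf H)$.
   Context: A loop is power-associative if every subloop generated by one element is a group; powers are computed in $\langle x\rangle$. The $Z^\pm$-power graph $\mathcal G^{\pm}(\mathbf G)$ has vertex set $G$, distinct $x,y$ adjacent iff $y=x^n$ or $x=y^n$ for some $n\in\mathbb Z\setminus\{0\}$; the $N$-power graph $\mathcal G^{+}(\mathbf G)$ is defined the same way with $n$ a positive integer. *)

From Stdlib Require Import Arith.
Set Implicit Arguments.

(* A loop in the equational (universal-algebra) presentation:
   (L, *, \, /, 1) with x*(x\y)=y, x\(x*y)=y, (y/x)*x=y, (y*x)/x=y,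
   1*x = x = x*1.  This is equivalent to: a quasigroup with identity. *)
Record loop := Loop {
  carrier :> Type;
  mul : carrier -> carrier -> carrier;
  one : carrier;
  ldiv : carrier -> carrier -> carrier;
  rdiv : carrier -> carrier -> carrier;
  mul_ldiv : forall x y, mul x (ldiv x y) = y;
  ldiv_mul : forall x y, ldiv x (mul x y) = y;
  rdiv_mul : forall x y, mul (rdiv y x) x = y;
  mul_rdiv : forall x y, rdiv (mul y x) x = y;
  mul1l : forall x, mul one x = x;
  mul1r : forall x, mul x one = x
}.

Inductive gen {G : loop} (x : G) : G -> Prop :=
  | gen_x : gen x x
  | gen_one : gen x (one G)
  | gen_mul : forall a b, gen x a -> gen x b -> gen x (mul G a b)
  | gen_ldiv : forall a b, gen x a -> gen x b -> gen x (ldiv G a b)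
  | gen_rdiv : forall a b, gen x a -> gen x b -> gen x (rdiv G a b).

(* Power-associative: every one-generated subloop <x> is a group,
   i.e. multiplication is associative on <x> (a subloop that is
   associative is a group). *)
Definition power_associative (G : loop) : Prop :=
  forall x a b c : G, gen x a -> gen x b -> gen x c ->
    mul G (mul G a b) c = mul G a (mul G b c).

Fixpoint npow {G : loop} (x : G) (n : nat) : G :=
  match n with
  | 0 => one G
  | S k => mul G (npow x k) x
  end.

(* Negative powers: x^(-n) is the inverse of x^n in the group <x>,
   i.e. the unique z with x^n * z = 1. *)
Definition nnpow {G : loop} (x : G) (n : nat) : G := ldiv G (npow x n) (one G).

Definition is_pos_power {G : loop} (x y : G) : Prop :=
  exists n, 0 < n /\ y = npow x n.

Definition is_nz_power {G : loop} (x y : G) : Prop :=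
  exists n, 0 < n /\ (y = npow x n \/ y = nnpow x n).

Definition Npow_adj {G : loop} (x y : G) : Prop :=
  x <> y /\ (is_pos_power x y \/ is_pos_power y x).

Definition Zpow_adj {G : loop} (x y : G) : Prop :=
  x <> y /\ (is_nz_power x y \/ is_nz_power y x).

Definition graph_iso {A B : Type} (adjA : A -> A -> Prop) (adjB : B -> B -> Prop) : Prop :=
  exists (f : A -> B) (g : B -> A),
    (forall a, g (f a) = a) /\ (forall b, f (g b) = b) /\
    (forall a1 a2, adjA a1 a2 <-> adjB (f a1) (f a2)).

(* In the N-power graph of a power-associative loop the component of 1 consists of the
   elements of finite order; there 1 is adjacent to everything and inverses are positive
   powers, so the N- and Z-power graphs agree. Every other N-component C is disjoint from
   its inverse C^-1, and on the union of C and C^-1 the Z-power graph is the doubling of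
   the N-power graph of C: two copies of C, with x joined to y^-1 whenever x = y or x ~ y.
   Given an N-isomorphism f, colour the elements of infinite order so that the colour is
   constant on N-components and reversed both by inversion and by inversion conjugated
   by f; such a colouring exists because no odd alternating word in these two involutions
   maps a component into itself. Sending x to f x or to (f x^-1)^-1 according to its
   colour respects the doubling, hence is a Z-isomorphism. Conversely the Z-power graph
   determines inversion off torsion (x and x^-1 are the only Z-twins of x), and colourings
   of both sides recover the N-power graph. In both directions the isomorphism must first
   map the torsion part onto the torsion part; this can be arranged because a non-torsion
   component with a dominating vertex u is {u^k | k > 0}, a copy of the divisibility graph
   of the positive integers, and two such components can be swapped. *)

From Stdlib Require Import Arith Lia Bool Relations Classical ClassicalEpsilon
  FunctionalExtensionality PropExtensionality.
Set Implicit Arguments.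

(** * Graphs and isomorphisms *)

Notation connected R := (clos_refl_trans _ R).

Section Connectivity.
Variables (V W : Type) (R : V -> V -> Prop) (S : W -> W -> Prop).

Lemma connected_sym : (forall x y, R x y -> R y x) ->
  forall x y, connected R x y -> connected R y x.
Proof. intros Rsym x y; induction 1; eauto using rt_step, rt_refl, rt_trans. Qed.

Lemma connected_map (f : V -> W) : (forall x y, R x y -> S (f x) (f y)) ->
  forall x y, connected R x y -> connected S (f x) (f y).
Proof. intros Hf x y; induction 1; eauto using rt_step, rt_refl, rt_trans. Qed.

End Connectivity.

Lemma connected_mono {V : Type} {R R' : V -> V -> Prop} :
  (forall x y, R x y -> R' x y) -> forall x y, connected R x y -> connected R' x y.
Proof. intros HR; apply (connected_map R' (fun x => x) HR). Qed.

Definition cnbhd (V : Type) (R : V -> V -> Prop) (x y : V) : Prop := x = y \/ R x y.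

Definition doubled (X : Type) (Rel : X -> X -> Prop) (a b : X * bool) : Prop :=
  if Bool.eqb (snd a) (snd b) then Rel (fst a) (fst b) else cnbhd Rel (fst a) (fst b).

Definition divisibility_adj (i j : nat) : Prop := i <> j /\ (Nat.divide i j \/ Nat.divide j i).

Definition models_component (V X : Type) (R : V -> V -> Prop) (Rel : X -> X -> Prop)
  (u : V) (p : X -> V) : Prop :=
  (forall i j, p i = p j -> i = j) /\ (forall y, connected R u y <-> exists i, y = p i) /\
  (forall i j, R (p i) (p j) <-> Rel i j).

Lemma twins_adj (V : Type) (R : V -> V -> Prop) (a a' b b' : V) :
  (forall x y, R x y -> R y x) ->
  (forall z, cnbhd R a z <-> cnbhd R a' z) -> (forall z, cnbhd R b z <-> cnbhd R b' z) ->
  a <> b -> a' <> b' -> (R a b <-> R a' b').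
Proof.
  intros R_sym Ha Hb Hab Hab'.
  assert (Hc : forall x y, x <> y -> (R x y <-> cnbhd R x y)) by (unfold cnbhd; tauto).
  assert (Hs : forall x y, cnbhd R x y -> cnbhd R y x) by (intros x y [->|H]; [left|right]; auto).
  rewrite (Hc a b Hab), (Hc a' b' Hab'), Ha.
  split; intros H; apply Hs, Hb, Hs, H.
Qed.

Definition dominates (V : Type) (R : V -> V -> Prop) (u : V) : Prop :=
  forall y, connected R u y -> cnbhd R u y.

Definition is_iso (V W : Type) (R : V -> V -> Prop) (S : W -> W -> Prop)
  (f : V -> W) (g : W -> V) : Prop :=
  (forall x, g (f x) = x) /\ (forall w, f (g w) = w) /\ (forall x y, R x y <-> S (f x) (f y)).

Lemma graph_iso_ext {V W : Type} {R R' : V -> V -> Prop} {S S' : W -> W -> Prop} :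
  (forall x y, R x y <-> R' x y) -> (forall x y, S x y <-> S' x y) ->
  graph_iso R S -> graph_iso R' S'.
Proof.
  intros HR HS (f & g & gf & fg & Hf); exists f, g; repeat split; auto;
    rewrite <- HR, <- HS; apply Hf.
Qed.

Lemma is_iso_comp (U V W : Type) (R : U -> U -> Prop) (S : V -> V -> Prop) (T : W -> W -> Prop)
  f g f' g' : is_iso R S f g -> is_iso S T f' g' ->
  is_iso R T (fun x => f' (f x)) (fun z => g (g' z)).
Proof.
  intros (gf & fg & Hf) (gf' & fg' & Hf'); repeat split; intros.
  - rewrite gf'; apply gf.
  - rewrite fg; apply fg'.
  - apply Hf', Hf; assumption.
  - apply Hf, Hf'; assumption.
Qed.

Section Isomorphism.
Variables (V W : Type) (R : V -> V -> Prop) (S : W -> W -> Prop) (f : V -> W) (g : W -> V).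
Hypothesis Hiso : is_iso R S f g.

Lemma is_iso_sym : is_iso S R g f.
Proof.
  destruct Hiso as (gf & fg & Hf); repeat split; auto; intros H.
  - apply Hf; rewrite !fg; exact H.
  - rewrite <- (fg x), <- (fg y); apply Hf, H.
Qed.

Lemma iso_inj x y : f x = f y -> x = y.
Proof. destruct Hiso as (gf & _); intros E; rewrite <- (gf x), <- (gf y), E; reflexivity. Qed.

Lemma connected_iso x y : connected R x y <-> connected S (f x) (f y).
Proof.
  destruct Hiso as (gf & fg & Hf); split; [apply connected_map; apply Hf|].
  rewrite <- (gf x) at 2; rewrite <- (gf y) at 2.
  apply (connected_map R g); apply (proj2 (proj2 is_iso_sym)).
Qed.

Lemma connected_iso_base {e e'} : (forall a b, S a b -> S b a) -> connected S e' (f e) ->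
  forall x, connected R e x <-> connected S e' (f x).
Proof.
  intros S_sym He x; rewrite connected_iso; split; intros H; eapply rt_trans; eauto.
  apply connected_sym; auto.
Qed.

Lemma cnbhd_iso x y : cnbhd R x y <-> cnbhd S (f x) (f y).
Proof.
  unfold cnbhd; rewrite (proj2 (proj2 Hiso)).
  split; intros [E|H]; auto; left; [subst; reflexivity | apply iso_inj, E].
Qed.

Lemma doubled_iso a b a' b' : doubled R (a, b) (a', b') <-> doubled S (f a, b) (f a', b').
Proof. unfold doubled; simpl; destruct (Bool.eqb b b'); [apply Hiso | apply cnbhd_iso]. Qed.

Lemma dominates_iso w : dominates S w -> dominates R (g w).
Proof.
  destruct Hiso as (gf & fg & _); intros Hw y Hy.
  apply cnbhd_iso; rewrite fg; apply Hw.
  rewrite <- (fg w); apply connected_iso, Hy.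
Qed.

Lemma models_component_iso (X : Type) (Rel : X -> X -> Prop) w (q : X -> W) :
  models_component S Rel w q -> models_component R Rel (g w) (fun i => g (q i)).
Proof.
  intros (q_inj & q_range & q_rel); destruct Hiso as (gf & fg & Hf); repeat split.
  - intros i j E; apply q_inj; rewrite <- (fg (q i)), <- (fg (q j)), E; reflexivity.
  - rewrite connected_iso, fg, q_range; intros [i E]; exists i; rewrite <- E, gf; reflexivity.
  - intros [i ->]; rewrite connected_iso, !fg; apply q_range; exists i; reflexivity.
  - rewrite <- q_rel, Hf, !fg; auto.
  - rewrite <- q_rel, Hf, !fg; auto.
Qed.

End Isomorphism.

(** * Colouring against two involutions *)

Section TwoInvolutionColouring.
Variables (V : Type) (R : V -> V -> Prop) (core : V -> Prop) (s t : V -> V).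
Hypothesis R_sym : forall x y, R x y -> R y x.
Hypotheses (sK : forall x, s (s x) = x) (tK : forall x, t (t x) = x).
Hypotheses (s_R : forall x y, R x y -> R (s x) (s y)) (t_R : forall x y, R x y -> R (t x) (t y)).
Hypotheses (core_s : forall x, core (s x) <-> core x) (core_t : forall x, core (t x) <-> core x).
Hypothesis core_R : forall x y, R x y -> (core x <-> core y).
Hypotheses (s_apart : forall x, ~ core x -> ~ connected R x (s x))
  (t_apart : forall x, ~ core x -> ~ connected R x (t x)).

Definition flip (a : bool) : V -> V := if a then s else t.

Lemma flipK a x : flip a (flip a x) = x.
Proof. destruct a; simpl; auto. Qed.

Lemma flip_R a x y : R x y -> R (flip a x) (flip a y).
Proof. destruct a; simpl; auto. Qed.

Lemma core_flip a x : core (flip a x) <-> core x.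
Proof. destruct a; simpl; auto. Qed.

Lemma flip_apart a x : ~ core x -> ~ connected R x (flip a x).
Proof. destruct a; simpl; auto. Qed.

Inductive linked : V -> V -> bool -> Prop :=
| linked_refl x : linked x x false
| linked_step x y z b : R x y -> linked y z b -> linked x z b
| linked_flip a x z b : linked (flip a x) z b -> linked x z (negb b).

Lemma linked_trans x y z b b' : linked x y b -> linked y z b' -> linked x z (xorb b b').
Proof.
  induction 1 as [x|x y' y b Hxy _ IH|a x y b _ IH]; intros Hyz; simpl; auto.
  - apply linked_step with y'; auto.
  - replace (xorb (negb b) b') with (negb (xorb b b')) by (destruct b, b'; reflexivity).
    apply linked_flip with a; auto.
Qed.

Lemma linked_sym x y b : linked x y b -> linked y x b.
Proof.
  induction 1 as [x|x y z b Hxy _ IH|a x z b _ IH].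
  - apply linked_refl.
  - rewrite <- (xorb_false_r b); apply linked_trans with y; auto.
    apply linked_step with x; [apply R_sym, Hxy | apply linked_refl].
  - rewrite <- (xorb_true_r b); apply linked_trans with (flip a x); auto.
    change true with (negb false); apply (linked_flip a); rewrite flipK; apply linked_refl.
Qed.

Lemma linked_core x y b : linked x y b -> (core x <-> core y).
Proof.
  induction 1 as [|x y z b Hxy _ IH|a x z b _ IH]; [tauto| |].
  - rewrite <- IH; apply core_R, Hxy.
  - rewrite <- IH, core_flip; tauto.
Qed.

Fixpoint alternate (a : bool) (n : nat) (x : V) : V :=
  match n with
  | 0 => x
  | S n => alternate (negb a) n (flip a x)
  end.

Lemma alternate_R a n x y : R x y -> R (alternate a n x) (alternate a n y).
Proof. revert a x y; induction n; intros a x y H; simpl; auto using flip_R. Qed.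

Lemma alternate_last a n x : alternate a (S n) x = flip (xorb a (Nat.odd n)) (alternate a n x).
Proof.
  revert a x; induction n as [|n IH]; intros a x; [destruct a; reflexivity|].
  change (alternate a (S (S n)) x) with (alternate (negb a) (S n) (flip a x)).
  rewrite IH, Nat.odd_succ, <- Nat.negb_odd; destruct a, (Nat.odd n); reflexivity.
Qed.

(* Odd alternating words are palindromes, hence conjugates of a single flip. *)
Lemma alternate_odd_apart k a x : ~ core x -> ~ connected R (alternate a (2 * k + 1) x) x.
Proof.
  revert a x; induction k as [|k IH]; intros a x Hx Hloop.
  - apply (flip_apart a Hx), (connected_sym R_sym), Hloop.
  - replace (2 * S k + 1) with (S (S (2 * k + 1))) in Hloop by lia.
    rewrite alternate_last in Hloop.
    replace (Nat.odd (S (2 * k + 1))) with false in Hloop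
      by (replace (S (2 * k + 1)) with (2 * S k) by lia; symmetry; apply Nat.odd_even).
    rewrite xorb_false_r in Hloop.
    apply (IH (negb a) (flip a x)); [rewrite core_flip; exact Hx|].
    apply (connected_map R (flip a) (flip_R a)) in Hloop.
    rewrite flipK in Hloop; exact Hloop.
Qed.

Lemma linked_alternate x y b : linked x y b ->
  exists a n, Nat.odd n = b /\ connected R (alternate a n x) y.
Proof.
  induction 1 as [x|x y z b Hxy _ (a & n & Hn & IH)|a' x z b _ (a & n & Hn & IH)].
  - exists true, 0; split; [reflexivity | apply rt_refl].
  - exists a, n; split; [exact Hn|].
    eapply rt_trans; [apply rt_step, alternate_R, Hxy | exact IH].
  - destruct (Bool.bool_dec a a') as [<-|Ha].
    + destruct n as [|n].
      * exists a, 1; subst b; split; [reflexivity | exact IH].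
      * exists (negb a), n; split; [rewrite <- Hn, Nat.odd_succ, Nat.negb_even; reflexivity|].
        simpl in IH; rewrite flipK in IH; exact IH.
    + exists a', (S n); split; [rewrite <- Hn, Nat.odd_succ, Nat.negb_odd; reflexivity|].
      simpl; replace (negb a') with a by (destruct a, a'; simpl; congruence); exact IH.
Qed.

Lemma linked_loop_even x b : ~ core x -> linked x x b -> b = false.
Proof.
  intros Hx (a & n & Hn & Hloop)%linked_alternate.
  destruct b; [exfalso|reflexivity].
  destruct (proj1 (Nat.odd_spec n) Hn) as [k ->].
  apply (alternate_odd_apart k a Hx Hloop).
Qed.

Lemma linked_parity_unique x y b b' : ~ core y -> linked x y b -> linked x y b' -> b = b'.
Proof.
  intros Hy Hb Hb'; apply linked_sym in Hb.
  pose proof (linked_loop_even Hy (linked_trans Hb Hb')) as E.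
  destruct b, b'; simpl in E; congruence.
Qed.

Theorem two_involution_colouring : exists c : V -> bool,
  (forall x y, ~ core x -> R x y -> c x = c y) /\
  (forall x, ~ core x -> c (s x) = negb (c x)) /\
  (forall x, ~ core x -> c (t x) = negb (c x)).
Proof.
  set (class x := fun y => exists b, linked x y b).
  set (rep x := epsilon (inhabits x) (class x)).
  assert (rep_linked : forall x, exists b, linked (rep x) x b).
  { intros x; destruct (epsilon_spec (inhabits x) (class x)) as [b Hb];
      [exists x, false; apply linked_refl | exists b; apply linked_sym, Hb]. }
  assert (rep_eq : forall x y b, linked x y b -> rep x = rep y).
  { intros x y b Hxy; unfold rep.
    replace (class y) with (class x); [f_equal; apply proof_irrelevance|].
    apply functional_extensionality; intros z; apply propositional_extensionality.
    split; intros [b' Hb'].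
    - exists (xorb b b'); apply linked_trans with x; [apply linked_sym|]; auto.
    - exists (xorb b b'); apply linked_trans with y; auto. }
  set (c x := if excluded_middle_informative (linked (rep x) x true) then true else false).
  assert (c_spec : forall x b, ~ core x -> linked (rep x) x b -> c x = b).
  { intros x b Hx Hb; unfold c; destruct excluded_middle_informative as [Ht|Ht].
    - apply (linked_parity_unique Hx Ht Hb).
    - destruct b; [contradiction | reflexivity]. }
  assert (c_linked : forall x y b, ~ core x -> linked x y b -> c y = xorb (c x) b).
  { intros x y b Hx Hxy; destruct (rep_linked x) as [b0 H0].
    rewrite (c_spec x b0 Hx H0); apply c_spec.
    - rewrite <- (linked_core Hxy); exact Hx.
    - rewrite <- (rep_eq x y b Hxy); apply (linked_trans H0 Hxy). }
  exists c; split; [|split].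
  - intros x y Hx Hxy; rewrite (c_linked x y false Hx), xorb_false_r; [reflexivity|].
    apply linked_step with y; [exact Hxy | apply linked_refl].
  - intros x Hx; rewrite (c_linked x (s x) true Hx), xorb_true_r; [reflexivity|].
    change true with (negb false); apply (linked_flip true), linked_refl.
  - intros x Hx; rewrite (c_linked x (t x) true Hx), xorb_true_r; [reflexivity|].
    change true with (negb false); apply (linked_flip false), linked_refl.
Qed.

End TwoInvolutionColouring.

(** * Swapping isomorphic components *)

Section SwapComponents.
Variables (V X : Type) (R : V -> V -> Prop) (Rel : X -> X -> Prop) (u v : V) (p q : X -> V).
Hypothesis R_sym : forall x y, R x y -> R y x.
Hypotheses (Hp : models_component R Rel u p) (Hq : models_component R Rel v q).
Hypothesis Huv : ~ connected R u v.

Lemma index_inhabited : inhabited X.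
Proof. destruct (proj1 (proj1 (proj2 Hp) u) (rt_refl _ _ u)) as [i _]; exact (inhabits i). Qed.

Definition index_of (r : X -> V) (x : V) : X := epsilon index_inhabited (fun i => x = r i).

Lemma index_of_spec w r x : models_component R Rel w r -> connected R w x -> x = r (index_of r x).
Proof.
  intros (_ & Hrange & _) Hx; unfold index_of.
  apply (epsilon_spec index_inhabited (fun i => x = r i)).
  apply Hrange, Hx.
Qed.

Lemma index_of_app w r i : models_component R Rel w r -> index_of r (r i) = i.
Proof.
  intros Hr; symmetry; apply (proj1 Hr), (index_of_spec Hr).
  apply (proj1 (proj2 Hr)); exists i; reflexivity.
Qed.

Definition swap (x : V) : V :=
  if excluded_middle_informative (connected R u x) then q (index_of p x)
  else if excluded_middle_informative (connected R v x) then p (index_of q x)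
  else x.

Lemma in_component w r i : models_component R Rel w r -> connected R w (r i).
Proof. intros Hr; apply (proj1 (proj2 Hr)); exists i; reflexivity. Qed.

Lemma not_connected_v_u x : connected R v x -> ~ connected R u x.
Proof. intros Hv Hu; apply Huv, rt_trans with x; [exact Hu | apply connected_sym; auto]. Qed.

Lemma swap_p i : swap (p i) = q i.
Proof.
  unfold swap; destruct excluded_middle_informative as [_|Hn].
  - rewrite (index_of_app i Hp); reflexivity.
  - contradiction (Hn (in_component i Hp)).
Qed.

Lemma swap_q i : swap (q i) = p i.
Proof.
  unfold swap; destruct excluded_middle_informative as [Hu|_].
  - contradiction (not_connected_v_u (in_component i Hq) Hu).
  - destruct excluded_middle_informative as [_|Hn].
    + rewrite (index_of_app i Hq); reflexivity.
    + contradiction (Hn (in_component i Hq)).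
Qed.

Lemma swap_other x : ~ connected R u x -> ~ connected R v x -> swap x = x.
Proof.
  intros Hu Hv; unfold swap.
  destruct (excluded_middle_informative (connected R u x)); [contradiction|].
  destruct (excluded_middle_informative (connected R v x)); [contradiction | reflexivity].
Qed.

Lemma swapK x : swap (swap x) = x.
Proof.
  destruct (classic (connected R u x)) as [Hu|Hu].
  { pose proof (index_of_spec Hp Hu) as Ex.
    rewrite Ex at 1; rewrite swap_p, swap_q; symmetry; exact Ex. }
  destruct (classic (connected R v x)) as [Hv|Hv].
  { pose proof (index_of_spec Hq Hv) as Ex.
    rewrite Ex at 1; rewrite swap_q, swap_p; symmetry; exact Ex. }
  rewrite !(swap_other Hu Hv); reflexivity.
Qed.

Lemma swap_R x y : R x y -> R (swap x) (swap y).
Proof.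
  intros Hxy.
  assert (Hclosed : forall w, connected R w x <-> connected R w y).
  { split; intros H; eapply rt_trans; eauto using rt_step. }
  destruct (classic (connected R u x)) as [Hu|Hu].
  { pose proof (index_of_spec Hp Hu) as Ex.
    pose proof (index_of_spec Hp (proj1 (Hclosed u) Hu)) as Ey.
    rewrite Ex, Ey in *; rewrite !swap_p; apply (proj2 (proj2 Hq)), (proj2 (proj2 Hp)), Hxy. }
  destruct (classic (connected R v x)) as [Hv|Hv].
  { pose proof (index_of_spec Hq Hv) as Ex.
    pose proof (index_of_spec Hq (proj1 (Hclosed v) Hv)) as Ey.
    rewrite Ex, Ey in *; rewrite !swap_q; apply (proj2 (proj2 Hp)), (proj2 (proj2 Hq)), Hxy. }
  rewrite (swap_other Hu Hv), swap_other; [exact Hxy | rewrite <- Hclosed; assumption ..].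
Qed.

Lemma swap_components : exists tau, is_iso R R tau tau /\ (forall i, tau (p i) = q i).
Proof.
  exists swap; split; [|exact swap_p].
  repeat split; try apply swapK; [apply swap_R|].
  intros H; rewrite <- (swapK x), <- (swapK y); apply swap_R, H.
Qed.

End SwapComponents.

(* If the base points e, e' dominate their components, an isomorphism sending e
   outside the component of e' can be corrected by swapping two isomorphic
   dominated components. *)
Lemma iso_base_aligned (V W X : Type) (R : V -> V -> Prop) (S : W -> W -> Prop)
  (Rel : X -> X -> Prop) (i0 : X) (e : V) (e' : W) :
  (forall x y, R x y -> R y x) -> (forall x y, S x y -> S y x) ->
  dominates R e -> dominates S e' ->
  (forall u, ~ connected R e u -> dominates R u ->
     exists p, p i0 = u /\ models_component R Rel u p) ->
  (forall w, ~ connected S e' w -> dominates S w ->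
     exists q, q i0 = w /\ models_component S Rel w q) ->
  graph_iso R S -> exists f g, is_iso R S f g /\ connected S e' (f e).
Proof.
  intros R_sym S_sym dom_e dom_e' model_R model_S (f & g & Hiso).
  change (is_iso R S f g) in Hiso.
  destruct (classic (connected S e' (f e))) as [He|He]; [exists f, g; split; assumption|].
  pose proof Hiso as (gf & fg & _).
  assert (Hu : ~ connected R (g e') e).
  { intros H; apply He; apply (connected_iso Hiso) in H; rewrite fg in H; exact H. }
  destruct (model_R (g e')) as (p & p0 & Hp).
  { intros H; apply Hu, connected_sym; auto. }
  { apply (dominates_iso Hiso), dom_e'. }
  destruct (model_S (f e) He) as (q & q0 & Hq).
  { apply (dominates_iso (is_iso_sym Hiso)), dom_e. }
  pose proof (models_component_iso Hiso Hq) as Hgq; rewrite gf in Hgq.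
  destruct (swap_components R_sym Hp Hgq Hu) as (tau & Htau & tau_p).
  exists (fun x => f (tau x)), (fun w => tau (g w)); split; [exact (is_iso_comp Htau Hiso)|].
  destruct Htau as (tauK & _).
  rewrite <- (gf e), <- q0, <- tau_p, tauK, p0, fg; apply rt_refl.
Qed.

(** * Abstract power graphs *)

(* The N-power graph, inversion and identity of a power-associative loop, axiomatised by
   the properties the argument uses; [connected padj punit] is the torsion part. *)
Record pgraph (V : Type) := PGraph {
  padj : V -> V -> Prop;
  pinv : V -> V;
  punit : V;
  padj_sym : forall x y, padj x y -> padj y x;
  padj_irrefl : forall x y, padj x y -> x <> y;
  pinvK : forall x, pinv (pinv x) = x;
  padj_pinv : forall x y, padj x y -> padj (pinv x) (pinv y);
  pinv_punit : pinv punit = punit;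
  connected_pinv : forall x, connected padj x (pinv x) -> connected padj punit x;
  padj_of_pinv : forall x y, connected padj punit x -> connected padj punit y ->
    x <> y -> cnbhd padj x (pinv y) -> padj x y;
  punit_dominates : forall x, connected padj punit x -> cnbhd padj punit x;
  padj_no_twins : forall x y, ~ connected padj punit x -> padj x y ->
    exists z, ~ (cnbhd padj x z <-> cnbhd padj y z);
  dominated_component_model : forall u, ~ connected padj punit u -> dominates padj u ->
    exists p, p 0 = u /\ models_component padj (fun i j => divisibility_adj (S i) (S j)) u p
}.

Definition torsion (V : Type) (P : pgraph V) (x : V) : Prop := connected (padj P) (punit P) x.

Definition zadj (V : Type) (P : pgraph V) (x y : V) : Prop :=
  x <> y /\ (padj P x y \/ cnbhd (padj P) x (pinv P y)).

Section PowerGraphTheory.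
Variables (V : Type) (P : pgraph V).
Local Notation adj := (padj P).
Local Notation inv := (pinv P).

Lemma connected_padj_sym x y : connected adj x y -> connected adj y x.
Proof. apply connected_sym, padj_sym. Qed.

Lemma torsion_connected x y : torsion P x -> connected adj x y -> torsion P y.
Proof. apply rt_trans. Qed.

Lemma torsion_padj {x y} : adj x y -> (torsion P x <-> torsion P y).
Proof.
  intros Hxy; split; intros H; eapply torsion_connected; eauto using rt_step, padj_sym.
Qed.

Lemma pinv_inj x y : inv x = inv y -> x = y.
Proof. intros E; rewrite <- (pinvK P x), <- (pinvK P y), E; reflexivity. Qed.

Lemma padj_pinv_iff x y : adj (inv x) (inv y) <-> adj x y.
Proof.
  split; [|apply padj_pinv]; intros H.
  rewrite <- (pinvK P x), <- (pinvK P y); apply padj_pinv, H.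
Qed.

Lemma padj_pinv_comm x y : adj x (inv y) -> adj y (inv x).
Proof. intros H; apply padj_sym; rewrite <- (pinvK P y); apply padj_pinv, H. Qed.

Lemma connected_padj_pinv x y : connected adj x y -> connected adj (inv x) (inv y).
Proof. apply connected_map, padj_pinv. Qed.

Lemma torsion_pinv x : torsion P (inv x) <-> torsion P x.
Proof.
  unfold torsion; split; intros H; apply connected_padj_pinv in H;
    rewrite ?pinvK, ?pinv_punit in H; exact H.
Qed.

Lemma not_torsion_connected_pinv x : ~ torsion P x -> ~ connected adj x (inv x).
Proof. intros Hx H; apply Hx, connected_pinv, H. Qed.

Lemma not_torsion_pinv_neq x : ~ torsion P x -> inv x <> x.
Proof. intros Hx E; apply (not_torsion_connected_pinv Hx); rewrite E; apply rt_refl. Qed.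

Lemma zadj_of_padj x y : adj x y -> zadj P x y.
Proof. intros H; split; [apply (padj_irrefl P), H | left; exact H]. Qed.

Lemma zadj_sym x y : zadj P x y -> zadj P y x.
Proof.
  intros [Hne [H|[E|H]]]; split; auto.
  - left; apply padj_sym, H.
  - right; left; rewrite E, pinvK; reflexivity.
  - right; right; apply padj_pinv_comm, H.
Qed.

Lemma zadj_pinv x y : zadj P (inv x) (inv y) <-> zadj P x y.
Proof.
  unfold zadj, cnbhd; rewrite !padj_pinv_iff, pinvK.
  split; intros [Hne H]; split.
  - intros E; apply Hne; rewrite E; reflexivity.
  - destruct H as [H|[E|H]]; auto; right; left; rewrite <- E, pinvK; reflexivity.
  - intros E; apply Hne, pinv_inj, E.
  - destruct H as [H|[E|H]]; auto; right; left; rewrite E, pinvK; reflexivity.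
Qed.

Lemma zadj_torsion x y : zadj P x y -> (torsion P x <-> torsion P y).
Proof.
  intros [_ [H|[->|H]]].
  - apply torsion_padj, H.
  - rewrite torsion_pinv; reflexivity.
  - rewrite (torsion_padj H); apply torsion_pinv.
Qed.

Lemma zadj_torsion_iff_padj x y : torsion P x -> (zadj P x y <-> adj x y).
Proof.
  intros Hx; split; [|apply zadj_of_padj].
  intros Hxy; assert (Hy : torsion P y) by (apply (zadj_torsion Hxy), Hx).
  destruct Hxy as [Hne [H|H]]; [exact H | apply padj_of_pinv; auto].
Qed.

Lemma connected_zadj_torsion x y : connected (zadj P) x y -> (torsion P x <-> torsion P y).
Proof.
  induction 1 as [x y Hxy| |]; [apply zadj_torsion, Hxy | reflexivity | etransitivity; eauto].
Qed.

Lemma torsion_iff_connected_zadj x : torsion P x <-> connected (zadj P) (punit P) x.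
Proof.
  split; [apply connected_mono, zadj_of_padj|].
  intros H; apply (connected_zadj_torsion H), rt_refl.
Qed.

Lemma connected_zadj_split x y :
  connected (zadj P) x y -> connected adj x y \/ connected adj x (inv y).
Proof.
  induction 1 as [x y [_ [H|[->|H]]]|x|x y z _ [IH1|IH1] _ [IH2|IH2]].
  - left; apply rt_step, H.
  - right; apply rt_refl.
  - right; apply rt_step, H.
  - left; apply rt_refl.
  - left; eapply rt_trans; eauto.
  - right; eapply rt_trans; eauto.
  - right; eapply rt_trans; [exact IH1 | apply connected_padj_pinv, IH2].
  - left; eapply rt_trans; [exact IH1|].
    rewrite <- (pinvK P z); apply connected_padj_pinv, IH2.
Qed.

Lemma cnbhd_zadj_iff x z :
  cnbhd (zadj P) x z <-> x = z \/ adj x z \/ cnbhd adj x (inv z).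
Proof.
  unfold zadj, cnbhd; split; [tauto|].
  destruct (classic (x = z)); tauto.
Qed.

Lemma cnbhd_zadj_pinv x z : cnbhd (zadj P) (inv x) z <-> cnbhd (zadj P) x z.
Proof.
  rewrite !cnbhd_zadj_iff; unfold cnbhd; rewrite padj_pinv_iff.
  split; intros [E|[H|[E|H]]]; subst.
  - right; right; left; rewrite pinvK; reflexivity.
  - right; right; right; apply padj_pinv_comm, padj_sym, H.
  - left; apply pinv_inj, E.
  - right; left; exact H.
  - right; right; left; reflexivity.
  - right; right; right; exact H.
  - left; apply pinvK.
  - right; left; apply padj_sym, padj_pinv_comm, H.
Qed.

Lemma zadj_component w z : ~ torsion P w -> connected adj w z -> (zadj P w z <-> adj w z).
Proof.
  intros Hw Hwz; split; [|apply zadj_of_padj].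
  assert (Hzw : connected adj z w) by apply connected_padj_sym, Hwz.
  intros [_ [H|[E|H]]]; [exact H| |]; exfalso; apply Hw; apply (torsion_connected (x:=z));
    try exact Hzw; apply connected_pinv.
  - subst w; exact Hzw.
  - apply (rt_trans _ _ _ w); [exact Hzw | apply rt_step, H].
Qed.

Lemma cnbhd_zadj_component w z : ~ torsion P w -> connected adj w z ->
  (cnbhd (zadj P) w z <-> cnbhd adj w z).
Proof. intros Hw Hwz; unfold cnbhd; rewrite zadj_component by assumption; reflexivity. Qed.

Lemma zadj_twins_not_padj x y : ~ torsion P x ->
  (forall z, cnbhd (zadj P) x z <-> cnbhd (zadj P) y z) -> ~ adj x y.
Proof.
  intros Hx Htw Hxy; destruct (padj_no_twins P y Hx Hxy) as [z Hz]; apply Hz.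
  assert (Hyx : connected adj y x) by apply rt_step, padj_sym, Hxy.
  assert (Hy : ~ torsion P y) by (rewrite <- (torsion_padj Hxy); exact Hx).
  destruct (classic (connected adj x z)) as [Hxz|Hxz].
  - rewrite <- !cnbhd_zadj_component; eauto using rt_trans.
  - split; intros [E|H]; exfalso; apply Hxz; subst; eauto using rt_step, rt_refl, rt_trans.
Qed.

Lemma zadj_twins x y : ~ torsion P x ->
  (forall z, cnbhd (zadj P) x z <-> cnbhd (zadj P) y z) -> y = x \/ y = inv x.
Proof.
  intros Hx Htw; destruct (proj1 (Htw x) (or_introl eq_refl)) as [E|Hyx]; [auto|].
  destruct (zadj_sym Hyx) as [_ [H|[E|H]]].
  - exfalso; apply (zadj_twins_not_padj Hx Htw H).
  - right; rewrite E, pinvK; reflexivity.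
  - exfalso; apply (zadj_twins_not_padj (y := inv y) Hx); [|exact H].
    intros z; rewrite Htw, cnbhd_zadj_pinv; reflexivity.
Qed.

Lemma cnbhd_padj_pinv_comm x y : cnbhd adj x (inv y) <-> cnbhd adj (inv x) y.
Proof.
  unfold cnbhd; split; intros [E|H].
  - left; rewrite E, pinvK; reflexivity.
  - right; apply padj_sym, padj_pinv_comm, H.
  - left; rewrite <- E, pinvK; reflexivity.
  - right; apply padj_pinv_comm, padj_sym, H.
Qed.

Section Colour.
Variable c : V -> bool.
Hypothesis c_padj : forall {x y}, ~ torsion P x -> adj x y -> c x = c y.
Hypothesis c_pinv : forall {x}, ~ torsion P x -> c (inv x) = negb (c x).

Lemma zadj_same_colour {x y} : ~ torsion P x -> c x = c y -> (zadj P x y <-> adj x y).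
Proof.
  intros Hx Hc; split; [|apply zadj_of_padj].
  intros [_ [H|[E|H]]]; [exact H| |]; exfalso.
  - subst x; rewrite torsion_pinv in Hx; rewrite c_pinv in Hc; auto.
    destruct (c y); discriminate.
  - rewrite (c_padj Hx H), c_pinv in Hc; [destruct (c y); discriminate|].
    rewrite <- torsion_pinv, <- (torsion_padj H); exact Hx.
Qed.

Lemma zadj_other_colour {x y} : ~ torsion P x -> c x <> c y ->
  (zadj P x y <-> cnbhd adj x (inv y)).
Proof.
  intros Hx Hc; split.
  - intros [_ [H|H]]; [exfalso; apply Hc, c_padj|]; auto.
  - intros H; split; [intros E; apply Hc; rewrite E; reflexivity | right; exact H].
Qed.

Lemma padj_iff_zadj_same_colour {x y} : ~ torsion P x -> (adj x y <-> zadj P x y /\ c x = c y).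
Proof.
  intros Hx; split.
  - intros H; split; [apply zadj_of_padj, H | apply c_padj; auto].
  - intros [H Hc]; apply (zadj_same_colour Hx Hc), H.
Qed.

Definition canon x := if c x then x else inv x.

(* Off torsion, the Z-power graph is the doubling of the N-power graph on the
   vertices of colour [true]. *)
Lemma zadj_doubled x y : ~ torsion P x -> ~ torsion P y ->
  (zadj P x y <-> doubled adj (canon x, c x) (canon y, c y)).
Proof.
  intros Hx Hy; unfold doubled, canon; simpl.
  destruct (c x) eqn:Ex, (c y) eqn:Ey; simpl.
  - apply zadj_same_colour; congruence.
  - apply zadj_other_colour; congruence.
  - rewrite zadj_other_colour by congruence; apply cnbhd_padj_pinv_comm.
  - rewrite zadj_same_colour by congruence; symmetry; apply padj_pinv_iff.
Qed.

End Colour.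

End PowerGraphTheory.

Section ZadjComponents.
Variables (V : Type) (P : pgraph V).
Local Notation adj := (padj P).
Local Notation inv := (pinv P).

Lemma punit_dominates_zadj : dominates (zadj P) (punit P).
Proof.
  intros y Hy%torsion_iff_connected_zadj.
  destruct (punit_dominates P Hy) as [E|H]; [left; exact E | right; apply zadj_of_padj, H].
Qed.

Lemma dominates_padj_of_zadj u : ~ torsion P u -> dominates (zadj P) u -> dominates adj u.
Proof.
  intros Hu Hdom y Hy; rewrite <- cnbhd_zadj_component by assumption.
  apply Hdom, (connected_mono (zadj_of_padj P)), Hy.
Qed.

Section DoubledComponent.
Variables (X : Type) (Rel : X -> X -> Prop) (u : V) (p : X -> V).
Hypotheses (Hu : ~ torsion P u) (Hp : models_component adj Rel u p).

Lemma model_connected i : connected adj u (p i).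
Proof. apply (proj1 (proj2 Hp)); exists i; reflexivity. Qed.

Lemma model_not_torsion i : ~ torsion P (p i).
Proof. intros Hi; apply Hu, (torsion_connected Hi), connected_padj_sym, model_connected. Qed.

Lemma model_pinv_apart i : ~ connected adj u (inv (p i)).
Proof.
  intros Hi; apply (not_torsion_connected_pinv (@model_not_torsion i)).
  apply rt_trans with u; [apply connected_padj_sym, model_connected | exact Hi].
Qed.

Lemma zadj_model i j : zadj P (p i) (p j) <-> Rel i j.
Proof.
  rewrite zadj_component, (proj2 (proj2 Hp)); [reflexivity | apply model_not_torsion|].
  apply rt_trans with u; [apply connected_padj_sym|]; apply model_connected.
Qed.

Lemma zadj_model_pinv i j : zadj P (p i) (inv (p j)) <-> cnbhd Rel i j.
Proof.
  destruct Hp as (p_inj & _ & p_rel); unfold zadj; rewrite pinvK; split.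
  - intros [_ [H|[E|H]]]; [exfalso | left; apply p_inj, E | right; apply p_rel, H].
    apply (model_pinv_apart j), rt_trans with (p i); [apply model_connected | apply rt_step, H].
  - intros H; split; [intros E; apply (model_pinv_apart j); rewrite <- E; apply model_connected|].
    right; destruct H as [->|H]; [left; reflexivity | right; apply p_rel, H].
Qed.

Lemma cnbhd_model_sym i j : cnbhd Rel i j -> cnbhd Rel j i.
Proof.
  destruct Hp as (_ & _ & p_rel).
  intros [->|H]; [left; reflexivity | right; apply p_rel, padj_sym, p_rel, H].
Qed.

Definition doubled_model (a : X * bool) : V := if snd a then inv (p (fst a)) else p (fst a).

Lemma zadj_component_model : models_component (zadj P) (doubled Rel) u doubled_model.
Proof.
  destruct Hp as (p_inj & p_range & _); split; [|split].
  - intros [i []] [j []]; unfold doubled_model; simpl; intros E.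
    + apply pinv_inj, p_inj in E; subst; reflexivity.
    + exfalso; apply (model_pinv_apart i); rewrite E; apply model_connected.
    + exfalso; apply (model_pinv_apart j); rewrite <- E; apply model_connected.
    + apply p_inj in E; subst; reflexivity.
  - intros y; split.
    + intros Hy; destruct (connected_zadj_split Hy) as [Hc|Hc]; apply p_range in Hc as [i E].
      * exists (i, false); exact E.
      * exists (i, true); unfold doubled_model; simpl; rewrite <- E, pinvK; reflexivity.
    + intros [[i []] ->]; unfold doubled_model; simpl; [apply rt_trans with (p i)|];
        try apply (connected_mono (zadj_of_padj P)), model_connected.
      apply rt_step, zadj_model_pinv; left; reflexivity.
  - intros [i []] [j []]; unfold doubled, doubled_model; simpl.
    + rewrite zadj_pinv; apply zadj_model.
    + split; intros H; [apply cnbhd_model_sym, zadj_model_pinv, zadj_sym, H|].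
      apply zadj_sym, zadj_model_pinv, cnbhd_model_sym, H.
    + apply zadj_model_pinv.
    + apply zadj_model.
Qed.

End DoubledComponent.

Lemma zadj_dominated_component_model u :
  ~ connected (zadj P) (punit P) u -> dominates (zadj P) u ->
  exists q, q (0, false) = u /\
    models_component (zadj P) (doubled (fun i j => divisibility_adj (S i) (S j))) u q.
Proof.
  rewrite <- torsion_iff_connected_zadj; intros Hu Hdom.
  destruct (dominated_component_model P Hu (dominates_padj_of_zadj Hu Hdom)) as (p & p0 & Hp).
  exists (doubled_model p); split; [exact p0 | apply (zadj_component_model Hu Hp)].
Qed.

End ZadjComponents.

(** * Transfer of isomorphisms *)

Lemma padj_iso_torsion_aligned (V W : Type) (P : pgraph V) (Q : pgraph W) :
  graph_iso (padj P) (padj Q) -> exists f g,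
    is_iso (padj P) (padj Q) f g /\ (forall x, torsion P x <-> torsion Q (f x)).
Proof.
  intros Hiso.
  destruct (iso_base_aligned (Rel := fun i j => divisibility_adj (S i) (S j)) (i0 := 0)
    (padj_sym P) (padj_sym Q)
    (punit_dominates P) (punit_dominates Q) (dominated_component_model P)
    (dominated_component_model Q) Hiso) as (f & g & Hfg & Hbase).
  exists f, g; split; [exact Hfg | apply (connected_iso_base Hfg (padj_sym Q) Hbase)].
Qed.

Lemma zadj_iso_torsion_aligned (V W : Type) (P : pgraph V) (Q : pgraph W) :
  graph_iso (zadj P) (zadj Q) -> exists f g,
    is_iso (zadj P) (zadj Q) f g /\ (forall x, torsion P x <-> torsion Q (f x)).
Proof.
  intros Hiso.
  destruct (iso_base_aligned (Rel := doubled (fun i j => divisibility_adj (S i) (S j)))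
    (i0 := (0, false))
    (@zadj_sym _ P) (@zadj_sym _ Q) (@punit_dominates_zadj _ P) (@punit_dominates_zadj _ Q)
    (@zadj_dominated_component_model _ P) (@zadj_dominated_component_model _ Q) Hiso)
    as (f & g & Hfg & Hbase).
  exists f, g; split; [exact Hfg|]; intros x.
  rewrite !torsion_iff_connected_zadj; apply (connected_iso_base Hfg (@zadj_sym _ Q) Hbase).
Qed.

Definition colour_lift (V W : Type) (P : pgraph V) (Q : pgraph W) (f : V -> W) (c : V -> bool)
  (x : V) : W :=
  if excluded_middle_informative (torsion P x) then f x
  else if c x then f x else pinv Q (f (pinv P x)).

Section ColourLift.
Variables (V W : Type) (P : pgraph V) (Q : pgraph W) (f : V -> W) (g : W -> V).
Variables (c : V -> bool) (d : W -> bool).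
Hypotheses (gf : forall x, g (f x) = x) (f_torsion : forall x, torsion P x <-> torsion Q (f x)).
Hypotheses (c_pinv : forall {x}, ~ torsion P x -> c (pinv P x) = negb (c x))
  (d_pinv : forall {w}, ~ torsion Q w -> d (pinv Q w) = negb (d w))
  (d_f : forall x, d (f x) = c x).

Lemma torsion_colour_lift x : torsion Q (colour_lift P Q f c x) <-> torsion P x.
Proof.
  unfold colour_lift; destruct excluded_middle_informative; [symmetry; apply f_torsion|].
  destruct (c x); rewrite ?torsion_pinv, <- f_torsion, ?torsion_pinv; reflexivity.
Qed.

Lemma colour_lift_colour x : ~ torsion P x -> d (colour_lift P Q f c x) = c x.
Proof.
  intros Hx; unfold colour_lift; destruct excluded_middle_informative; [contradiction|].
  destruct (c x) eqn:E; [rewrite d_f; exact E|].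
  rewrite d_pinv, d_f, c_pinv, E; [reflexivity | exact Hx|].
  rewrite <- f_torsion, torsion_pinv; exact Hx.
Qed.

Lemma colour_lift_canon x : ~ torsion P x ->
  canon Q d (colour_lift P Q f c x) = f (canon P c x).
Proof.
  intros Hx; unfold canon; rewrite colour_lift_colour by exact Hx.
  unfold colour_lift; destruct excluded_middle_informative; [contradiction|].
  destruct (c x); [reflexivity | apply pinvK].
Qed.

Lemma colour_lift_cancel x : colour_lift Q P g d (colour_lift P Q f c x) = x.
Proof.
  destruct (classic (torsion P x)) as [Hx|Hx].
  { unfold colour_lift at 2; destruct excluded_middle_informative; [|contradiction].
    unfold colour_lift; destruct excluded_middle_informative as [_|Hn]; [apply gf|].
    contradict Hn; apply f_torsion, Hx. }
  pose proof (colour_lift_colour Hx) as Hcol.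
  assert (Ht : ~ torsion Q (colour_lift P Q f c x)) by (rewrite torsion_colour_lift; exact Hx).
  unfold colour_lift at 1; destruct excluded_middle_informative; [contradiction|].
  rewrite Hcol; unfold colour_lift; destruct excluded_middle_informative; [contradiction|].
  destruct (c x); [apply gf|].
  rewrite pinvK, gf, pinvK; reflexivity.
Qed.

End ColourLift.

Section PadjIsoToZadjIso.
Variables (V W : Type) (P : pgraph V) (Q : pgraph W) (f : V -> W) (g : W -> V).
Hypotheses (Hiso : is_iso (padj P) (padj Q) f g)
  (f_torsion : forall x, torsion P x <-> torsion Q (f x)).

Lemma g_torsion w : torsion P (g w) <-> torsion Q w.
Proof. rewrite f_torsion, (proj1 (proj2 Hiso)); reflexivity. Qed.

Definition pulled_inv (x : V) : V := g (pinv Q (f x)).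

Lemma pulled_invK x : pulled_inv (pulled_inv x) = x.
Proof.
  destruct Hiso as (gf & fg & _); unfold pulled_inv; rewrite fg, pinvK; apply gf.
Qed.

Lemma padj_pulled_inv x y : padj P x y -> padj P (pulled_inv x) (pulled_inv y).
Proof.
  intros H; apply (proj2 (proj2 (is_iso_sym Hiso))), padj_pinv, (proj2 (proj2 Hiso)), H.
Qed.

Lemma torsion_pulled_inv x : torsion P (pulled_inv x) <-> torsion P x.
Proof. unfold pulled_inv; rewrite g_torsion, torsion_pinv, f_torsion; reflexivity. Qed.

Lemma pulled_inv_apart x : ~ torsion P x -> ~ connected (padj P) x (pulled_inv x).
Proof.
  rewrite f_torsion; intros Hx H; apply (not_torsion_connected_pinv Hx).
  apply (connected_iso Hiso) in H; unfold pulled_inv in H.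
  rewrite (proj1 (proj2 Hiso)) in H; exact H.
Qed.

Section WithColour.
Variable c : V -> bool.
Hypotheses (c_padj : forall x y, ~ torsion P x -> padj P x y -> c x = c y)
  (c_pinv : forall x, ~ torsion P x -> c (pinv P x) = negb (c x))
  (c_pulled : forall x, ~ torsion P x -> c (pulled_inv x) = negb (c x)).

Definition pushed_colour (w : W) : bool := c (g w).

Lemma pushed_colour_padj w w' : ~ torsion Q w -> padj Q w w' ->
  pushed_colour w = pushed_colour w'.
Proof.
  intros Hw H; apply c_padj; [rewrite g_torsion; exact Hw|].
  apply (proj2 (proj2 (is_iso_sym Hiso))), H.
Qed.

Lemma pushed_colour_pinv w : ~ torsion Q w -> pushed_colour (pinv Q w) = negb (pushed_colour w).
Proof.
  intros Hw; unfold pushed_colour.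
  rewrite <- (proj1 (proj2 Hiso) w) at 1; apply c_pulled; rewrite g_torsion; exact Hw.
Qed.

Lemma colour_lift_torsion x : torsion P x -> colour_lift P Q f c x = f x.
Proof. intros Hx; unfold colour_lift; destruct excluded_middle_informative; tauto. Qed.

Lemma zadj_colour_lift x y :
  zadj P x y <-> zadj Q (colour_lift P Q f c x) (colour_lift P Q f c y).
Proof.
  pose proof (torsion_colour_lift f c f_torsion) as T.
  destruct (classic (torsion P x)) as [Hx|Hx]; destruct (classic (torsion P y)) as [Hy|Hy].
  - rewrite !colour_lift_torsion, zadj_torsion_iff_padj, zadj_torsion_iff_padj by
      (auto; apply f_torsion; auto).
    apply Hiso.
  - split; intros H%zadj_torsion; rewrite ?T in H; tauto.
  - split; intros H%zadj_torsion; rewrite ?T in H; tauto.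
  - assert (d_f : forall x, pushed_colour (f x) = c x)
      by (intros z; apply (f_equal c), (proj1 Hiso)).
    rewrite (zadj_doubled c c_padj c_pinv Hx Hy).
    rewrite (zadj_doubled pushed_colour pushed_colour_padj pushed_colour_pinv)
      by (rewrite T; assumption).
    rewrite !(colour_lift_canon f c pushed_colour f_torsion c_pinv pushed_colour_pinv d_f),
      !(colour_lift_colour f c pushed_colour f_torsion c_pinv pushed_colour_pinv d_f)
      by assumption.
    apply (doubled_iso Hiso).
Qed.

End WithColour.

Lemma zadj_iso_of_torsion_preserving : graph_iso (zadj P) (zadj Q).
Proof.
  destruct Hiso as (gf & fg & _).
  destruct (two_involution_colouring (R := padj P) (torsion P) (pinv P) pulled_inv)
    as (c & c_padj & c_pinv & c_pulled).
  all: try first [apply padj_sym | apply pinvK | apply pulled_invK | apply padj_pinv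
    | apply padj_pulled_inv | apply torsion_pinv | apply torsion_pulled_inv | apply torsion_padj
    | apply not_torsion_connected_pinv | apply pulled_inv_apart].
  exists (colour_lift P Q f c), (colour_lift Q P g (pushed_colour c)); split; [|split].
  - apply (colour_lift_cancel f g c (pushed_colour c) gf f_torsion c_pinv
      (pushed_colour_pinv c c_pulled)).
    intros x; unfold pushed_colour; rewrite gf; reflexivity.
  - apply (colour_lift_cancel g f (pushed_colour c) c fg (fun w => iff_sym (g_torsion w))
      (pushed_colour_pinv c c_pulled) c_pinv); reflexivity.
  - apply zadj_colour_lift; assumption.
Qed.

End PadjIsoToZadjIso.

Lemma pgraph_colouring (V : Type) (P : pgraph V) : exists c : V -> bool,
  (forall x y, ~ torsion P x -> padj P x y -> c x = c y) /\
  (forall x, ~ torsion P x -> c (pinv P x) = negb (c x)).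
Proof.
  destruct (two_involution_colouring (R := padj P) (torsion P) (pinv P) (pinv P))
    as (c & Hc & Hs & _).
  all: try solve [exists c; auto].
  all: first [apply padj_sym | apply pinvK | apply padj_pinv | apply torsion_pinv
    | apply torsion_padj | apply not_torsion_connected_pinv].
Qed.

Section ZadjIsoToPadjIso.
Variables (V W : Type) (P : pgraph V) (Q : pgraph W) (f : V -> W) (g : W -> V).
Hypotheses (Hiso : is_iso (zadj P) (zadj Q) f g)
  (f_torsion : forall x, torsion P x <-> torsion Q (f x)).

(* Off torsion, x and its inverse are exactly the Z-twins of x, and f preserves twins. *)
Lemma f_pinv x : ~ torsion P x -> f (pinv P x) = pinv Q (f x).
Proof.
  intros Hx; destruct (@zadj_twins _ Q (f x) (f (pinv P x))) as [E|E]; auto.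
  - rewrite <- f_torsion; exact Hx.
  - intros z; rewrite <- (proj1 (proj2 Hiso) z), <- !(cnbhd_iso Hiso), cnbhd_zadj_pinv.
    reflexivity.
  - exfalso; apply (not_torsion_pinv_neq Hx), (iso_inj Hiso), E.
Qed.

Variables (c : V -> bool) (d : W -> bool).
Hypotheses (c_padj : forall x y, ~ torsion P x -> padj P x y -> c x = c y)
  (c_pinv : forall x, ~ torsion P x -> c (pinv P x) = negb (c x))
  (d_padj : forall x y, ~ torsion Q x -> padj Q x y -> d x = d y)
  (d_pinv : forall x, ~ torsion Q x -> d (pinv Q x) = negb (d x)).

Definition realign (x : V) : V :=
  if excluded_middle_informative (torsion P x) then x
  else if Bool.eqb (c x) (d (f x)) then x else pinv P x.

Lemma realign_torsion x : torsion P x -> realign x = x.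
Proof. intros Hx; unfold realign; destruct excluded_middle_informative; tauto. Qed.

Lemma realign_twin x : realign x = x \/ realign x = pinv P x.
Proof.
  unfold realign; destruct excluded_middle_informative; [auto|].
  destruct (Bool.eqb _ _); auto.
Qed.

Lemma torsion_realign x : torsion P (realign x) <-> torsion P x.
Proof. destruct (realign_twin x) as [->| ->]; [reflexivity | apply torsion_pinv]. Qed.

Lemma realign_mismatch_pinv x : ~ torsion P x ->
  Bool.eqb (c (pinv P x)) (d (f (pinv P x))) = Bool.eqb (c x) (d (f x)).
Proof.
  intros Hx; rewrite f_pinv, c_pinv, d_pinv by (rewrite <- ?f_torsion; exact Hx).
  destruct (c x), (d (f x)); reflexivity.
Qed.

Lemma realignK x : realign (realign x) = x.
Proof.
  unfold realign at 2; destruct excluded_middle_informative as [Hx|Hx];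
    [apply realign_torsion, Hx|].
  destruct (Bool.eqb (c x) (d (f x))) eqn:E; unfold realign; destruct excluded_middle_informative;
    try solve [reflexivity | contradiction | rewrite torsion_pinv in *; contradiction].
  - rewrite E; reflexivity.
  - rewrite realign_mismatch_pinv, E, pinvK by exact Hx; reflexivity.
Qed.

Lemma colour_realign x : ~ torsion P x -> d (f (realign x)) = c x.
Proof.
  intros Hx; unfold realign; destruct excluded_middle_informative; [contradiction|].
  destruct (Bool.eqb (c x) (d (f x))) eqn:E.
  - symmetry; apply Bool.eqb_prop, E.
  - rewrite f_pinv, d_pinv by (rewrite <- ?f_torsion; exact Hx).
    destruct (c x), (d (f x)); simpl in *; congruence.
Qed.

Lemma zadj_realign x y : zadj P (realign x) (realign y) <-> zadj P x y.
Proof.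
  destruct (classic (x = y)) as [<-|Hne]; [split; intros [H _]; congruence|].
  assert (Htw : forall a z, cnbhd (zadj P) (realign a) z <-> cnbhd (zadj P) a z)
    by (intros a z; destruct (realign_twin a) as [->| ->]; [reflexivity | apply cnbhd_zadj_pinv]).
  apply twins_adj; auto using zadj_sym.
  intros E; apply Hne; rewrite <- (realignK x), E, realignK; reflexivity.
Qed.

Lemma padj_realign x y : padj P x y <-> padj Q (f (realign x)) (f (realign y)).
Proof.
  assert (Tr : padj Q (f (realign x)) (f (realign y)) -> (torsion P x <-> torsion P y)).
  { intros H%torsion_padj; rewrite <- !f_torsion, !torsion_realign in H; exact H. }
  destruct (classic (torsion P x)) as [Hx|Hx]; destruct (classic (torsion P y)) as [Hy|Hy].
  - rewrite !realign_torsion, <- zadj_torsion_iff_padj, <- zadj_torsion_iff_padj by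
      (auto; apply f_torsion; auto).
    apply Hiso.
  - split; [intros H%torsion_padj | intros H%Tr]; tauto.
  - split; [intros H%torsion_padj | intros H%Tr]; tauto.
  - rewrite (padj_iff_zadj_same_colour c c_padj c_pinv Hx),
      (padj_iff_zadj_same_colour d d_padj d_pinv (x := f (realign x)) (y := f (realign y)))
      by (rewrite <- f_torsion, torsion_realign; exact Hx).
    rewrite !colour_realign, <- (proj2 (proj2 Hiso)), zadj_realign by assumption.
    reflexivity.
Qed.

Lemma realign_iso : is_iso (padj P) (padj Q) (fun x => f (realign x)) (fun w => realign (g w)).
Proof.
  destruct Hiso as (gf & fg & _); split; [|split; [|exact padj_realign]]; intros.
  - rewrite gf; apply realignK.
  - rewrite realignK; apply fg.
Qed.

End ZadjIsoToPadjIso.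

Lemma padj_iso_of_torsion_preserving (V W : Type) (P : pgraph V) (Q : pgraph W) f g :
  is_iso (zadj P) (zadj Q) f g -> (forall x, torsion P x <-> torsion Q (f x)) ->
  graph_iso (padj P) (padj Q).
Proof.
  intros Hiso f_torsion.
  destruct (pgraph_colouring P) as (c & c_padj & c_pinv).
  destruct (pgraph_colouring Q) as (d & d_padj & d_pinv).
  eexists; eexists; exact (@realign_iso _ _ P Q f g Hiso f_torsion c d c_padj c_pinv d_padj d_pinv).
Qed.

Theorem pgraph_zadj_iso_of_padj_iso (V W : Type) (P : pgraph V) (Q : pgraph W) :
  graph_iso (padj P) (padj Q) -> graph_iso (zadj P) (zadj Q).
Proof.
  intros (f & g & Hiso & f_torsion)%padj_iso_torsion_aligned.
  exact (zadj_iso_of_torsion_preserving Hiso f_torsion).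
Qed.

Theorem pgraph_padj_iso_of_zadj_iso (V W : Type) (P : pgraph V) (Q : pgraph W) :
  graph_iso (zadj P) (zadj Q) -> graph_iso (padj P) (padj Q).
Proof.
  intros (f & g & Hiso & f_torsion)%zadj_iso_torsion_aligned.
  exact (padj_iso_of_torsion_preserving Hiso f_torsion).
Qed.

(** * Power-associative loops *)

Section PowerAssociativeLoop.
Variable G : loop.

Definition inv (x : G) : G := ldiv G x (one G).

Definition has_finite_order (x : G) : Prop := exists k, 0 < k /\ npow x k = one G.

Definition commensurable (x y : G) : Prop :=
  exists m n, 0 < m /\ 0 < n /\ npow x m = npow y n.

Lemma gen_npow (x y : G) n : gen x y -> gen x (npow y n).
Proof. intros Hy; induction n; simpl; [apply gen_one | apply gen_mul; auto]. Qed.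

Lemma gen_inv (x y : G) : gen x y -> gen x (inv y).
Proof. intros Hy; apply gen_ldiv; [exact Hy | apply gen_one]. Qed.

Lemma npow1 (x : G) : npow x 1 = x.
Proof. apply mul1l. Qed.

Lemma npow_one n : npow (one G) n = one G.
Proof. induction n as [|n IH]; simpl; [reflexivity | rewrite IH; apply mul1l]. Qed.

Lemma mul_inv (x : G) : mul G x (inv x) = one G.
Proof. apply mul_ldiv. Qed.

Lemma inv_one : inv (one G) = one G.
Proof. unfold inv; rewrite <- (mul1l G (one G)) at 2; apply ldiv_mul. Qed.

Lemma idempotent_one (a : G) : mul G a a = a -> a = one G.
Proof.
  intros Haa; transitivity (ldiv G a (mul G a a)); [symmetry; apply ldiv_mul|].
  rewrite Haa; rewrite <- (mul1r G a) at 2; apply ldiv_mul.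
Qed.

Hypothesis PA : power_associative G.

Lemma npowD (x : G) m n : npow x (m + n) = mul G (npow x m) (npow x n).
Proof.
  induction n as [|n IH].
  - rewrite Nat.add_0_r; symmetry; apply mul1r.
  - rewrite Nat.add_succ_r; simpl; rewrite IH.
    apply (@PA x); apply gen_npow || apply gen_x; apply gen_x.
Qed.

Lemma npowM (x : G) m n : npow (npow x m) n = npow x (m * n).
Proof.
  induction n as [|n IH]; [rewrite Nat.mul_0_r; reflexivity|].
  simpl npow at 1; rewrite IH, <- npowD; f_equal; lia.
Qed.

Lemma npowSl (x : G) n : npow x (S n) = mul G x (npow x n).
Proof. rewrite <- Nat.add_1_l, npowD, npow1; reflexivity. Qed.

Lemma inv_mul (x w : G) : gen x w -> mul G (inv w) w = one G.
Proof.
  intros Hw; apply idempotent_one.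
  assert (Hv : gen x (inv w)) by (apply gen_inv; exact Hw).
  rewrite (@PA x (inv w) w (mul G (inv w) w)) by (try apply gen_mul; auto).
  rewrite <- (@PA x w (inv w) w) by auto.
  rewrite mul_inv, mul1l; reflexivity.
Qed.

Lemma invK (w : G) : inv (inv w) = w.
Proof. unfold inv at 1; rewrite <- (inv_mul (gen_x w)); apply ldiv_mul. Qed.

Lemma inv_inj (a b : G) : inv a = inv b -> a = b.
Proof. intros E; rewrite <- (invK a), <- (invK b), E; reflexivity. Qed.

Lemma inv_npow (x : G) n : inv (npow x n) = npow (inv x) n.
Proof.
  assert (Hx : gen x x) by apply gen_x.
  assert (Hix : gen x (inv x)) by (apply gen_inv, gen_x).
  assert (E : mul G (npow x n) (npow (inv x) n) = one G).
  { induction n as [|n IH]; [apply mul1l|].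
    assert (Hxn : gen x (npow x n)) by (apply gen_npow, gen_x).
    assert (Hixn : gen x (npow (inv x) n)) by (apply gen_npow, Hix).
    rewrite npowSl; simpl npow at 2.
    rewrite (@PA x x (npow x n)), <- (@PA x (npow x n) (npow (inv x) n) (inv x));
      auto using gen_mul.
    rewrite IH, mul1l; apply mul_inv. }
  unfold inv at 1; rewrite <- E; apply ldiv_mul.
Qed.

Lemma npow_cancel (x : G) m k : npow x (m + k) = npow x m -> npow x k = one G.
Proof.
  rewrite npowD; rewrite <- (mul1r G (npow x m)) at 2; intros E.
  rewrite <- (ldiv_mul G (npow x m) (npow x k)), E; apply ldiv_mul.
Qed.

Lemma npow_inj (x : G) {i j} : ~ has_finite_order x -> npow x i = npow x j -> i = j.
Proof.
  intros Hx E; destruct (Nat.lt_trichotomy i j) as [Hij|[Hij|Hij]]; auto; exfalso; apply Hx.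
  - exists (j - i); split; [lia|]; apply (npow_cancel x i).
    replace (i + (j - i)) with j by lia; auto.
  - exists (i - j); split; [lia|]; apply (npow_cancel x j).
    replace (j + (i - j)) with i by lia; auto.
Qed.

Lemma commensurable_trans (a b c : G) :
  commensurable a b -> commensurable b c -> commensurable a c.
Proof.
  intros (m & n & Hm & Hn & Eab) (p & q & Hp & Hq & Ebc).
  exists (m * p), (q * n); split; [nia | split; [nia|]].
  rewrite <- !npowM, Eab, !npowM, Nat.mul_comm, <- npowM, Ebc, npowM; reflexivity.
Qed.

Lemma connected_commensurable (x y : G) :
  connected (@Npow_adj G) x y -> commensurable x y.
Proof.
  induction 1 as [x y [_ [(n & Hn & ->)|(n & Hn & ->)]]|x|x y z _ IHxy _ IHyz].
  - exists n, 1; rewrite npow1; auto.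
  - exists 1, n; rewrite npow1; auto.
  - exists 1, 1; auto.
  - eapply commensurable_trans; eauto.
Qed.

Lemma finite_order_iff_connected (x : G) :
  has_finite_order x <-> connected (@Npow_adj G) (one G) x.
Proof.
  split.
  - intros (k & Hk & E); destruct (classic (x = one G)) as [->|Hne]; [apply rt_refl|].
    apply rt_step; split; [auto | right; exists k; auto].
  - intros (m & n & _ & Hn & E)%connected_commensurable.
    exists n; split; [exact Hn|]; rewrite <- E; apply npow_one.
Qed.

Lemma finite_order_npow (y : G) k : has_finite_order y -> has_finite_order (npow y k).
Proof.
  intros (m & Hm & E); exists m; split; [exact Hm|].
  rewrite npowM, Nat.mul_comm, <- npowM, E; apply npow_one.
Qed.

Lemma inv_finite_order_npow (y : G) : has_finite_order y -> exists j, inv y = npow y j.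
Proof.
  intros (k & Hk & E); exists (k - 1); unfold inv; rewrite <- E.
  replace k with (S (k - 1)) at 1 by lia; rewrite npowSl; apply ldiv_mul.
Qed.

Lemma finite_order_pos_power (y : G) j : has_finite_order y -> is_pos_power y (npow y j).
Proof.
  intros (k & Hk & E); destruct j as [|j].
  - exists k; rewrite E; auto.
  - exists (S j); split; [lia | reflexivity].
Qed.

Lemma commensurable_inv (x : G) : commensurable x (inv x) -> has_finite_order x.
Proof.
  intros (m & n & Hm & Hn & E); exists (m + n); split; [lia|].
  rewrite npowD, E, <- inv_npow; apply (@inv_mul x), gen_npow, gen_x.
Qed.

Lemma Npow_adj_sym (x y : G) : Npow_adj x y -> Npow_adj y x.
Proof. intros [Hne H]; split; [auto | tauto]. Qed.

Lemma Npow_adj_inv (x y : G) : Npow_adj x y -> Npow_adj (inv x) (inv y).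
Proof.
  intros [Hne [(n & Hn & ->)|(n & Hn & ->)]]; split; [intros E; apply Hne, inv_inj, E| |
    intros E; apply Hne, inv_inj, E|]; [left|right]; exists n; split; auto; apply inv_npow.
Qed.

Lemma Npow_adj_npow_iff (u : G) a b : ~ has_finite_order u -> 0 < a -> 0 < b ->
  (Npow_adj (npow u a) (npow u b) <-> divisibility_adj a b).
Proof.
  intros Hu Ha Hb; unfold Npow_adj, divisibility_adj, is_pos_power, Nat.divide.
  split.
  - intros [Hne [(n & Hn & E)|(n & Hn & E)]]; rewrite npowM in E; apply npow_inj in E; auto;
      (split; [intros ->; apply Hne; reflexivity|]); [left|right]; exists n; lia.
  - intros [Hne [(n & E)|(n & E)]]; (split; [intros E'; apply Hne, (npow_inj Hu E')|]);
      [left|right]; exists n; (split; [destruct n; lia|]); rewrite npowM; f_equal; lia.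
Qed.

Lemma npow_succ_apart (w : G) k : ~ has_finite_order w -> 2 <= k ->
  Npow_adj w (npow w (S k)) /\ ~ cnbhd (@Npow_adj G) (npow w k) (npow w (S k)).
Proof.
  intros Hw Hk; split.
  - rewrite <- (npow1 w) at 1; rewrite Npow_adj_npow_iff by (auto; lia).
    split; [lia | left; exists (S k); lia].
  - unfold cnbhd; rewrite Npow_adj_npow_iff by (auto; lia).
    intros [E|[_ [(n & E)|(n & E)]]]; [apply npow_inj in E; auto; lia | |];
      destruct n as [|[|n]]; nia.
Qed.

Lemma loop_padj_of_inv (x y : G) :
  connected (@Npow_adj G) (one G) x -> connected (@Npow_adj G) (one G) y -> x <> y ->
  cnbhd (@Npow_adj G) x (inv y) -> Npow_adj x y.
Proof.
  intros Hx%finite_order_iff_connected Hy%finite_order_iff_connected Hne H; split; [exact Hne|].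
  destruct (inv_finite_order_npow Hx) as [jx Ex]; destruct (inv_finite_order_npow Hy) as [jy Ey].
  destruct H as [E|[_ [(n & _ & E)|(n & _ & E)]]].
  - right; rewrite E, Ey; apply finite_order_pos_power, Hy.
  - left; rewrite <- (invK y), E, inv_npow, Ex, npowM; apply finite_order_pos_power, Hx.
  - right; rewrite E, Ey, npowM; apply finite_order_pos_power, Hy.
Qed.

Lemma loop_punit_dominates (x : G) :
  connected (@Npow_adj G) (one G) x -> cnbhd (@Npow_adj G) (one G) x.
Proof.
  intros (k & Hk & E)%finite_order_iff_connected.
  destruct (classic (one G = x)) as [->|Hne]; [left; reflexivity|].
  right; split; [exact Hne | right; exists k; auto].
Qed.

Lemma not_finite_order_root (x y : G) {k} : ~ has_finite_order x -> x = npow y k ->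
  ~ has_finite_order y.
Proof. intros Hx -> Hy; apply Hx, finite_order_npow, Hy. Qed.

Lemma loop_padj_no_twins (x y : G) : ~ connected (@Npow_adj G) (one G) x -> Npow_adj x y ->
  exists z, ~ (cnbhd (@Npow_adj G) x z <-> cnbhd (@Npow_adj G) y z).
Proof.
  rewrite <- finite_order_iff_connected; intros Hx [Hne [(k & Hk & ->)|(k & Hk & Ek)]].
  - assert (2 <= k) by (destruct k as [|[|k]]; [lia | rewrite npow1 in Hne; congruence | lia]).
    destruct (npow_succ_apart Hx H) as [Hadj Hapart].
    exists (npow x (S k)); intros Hiff; apply Hapart, Hiff; right; exact Hadj.
  - assert (2 <= k) by (destruct k as [|[|k]]; [lia | rewrite npow1 in Ek; congruence | lia]).
    destruct (npow_succ_apart (not_finite_order_root Hx Ek) H) as [Hadj Hapart].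
    exists (npow y (S k)); intros Hiff; apply Hapart; rewrite <- Ek; apply Hiff.
    right; exact Hadj.
Qed.

Lemma loop_component_model (u : G) : ~ connected (@Npow_adj G) (one G) u ->
  dominates (@Npow_adj G) u ->
  exists p, p 0 = u /\
    models_component (@Npow_adj G) (fun i j => divisibility_adj (S i) (S j)) u p.
Proof.
  rewrite <- finite_order_iff_connected; intros Hu Hdom.
  exists (fun k => npow u (S k)); split; [apply npow1|split; [|split]].
  - intros i j E; apply npow_inj in E; auto.
  - intros y; split.
    + intros Hc; destruct (Hdom y Hc) as [<-|[Hne [(n & Hn & ->)|(n & Hn & Ey)]]].
      * exists 0; symmetry; apply npow1.
      * exists (n - 1); f_equal; lia.
      * exfalso.
        assert (2 <= n) by (destruct n as [|[|n]]; [lia | rewrite npow1 in Ey; congruence | lia]).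
        destruct (npow_succ_apart (not_finite_order_root Hu Ey) H) as [Hadj Hapart].
        apply Hapart; rewrite <- Ey; apply Hdom.
        apply rt_trans with y; [exact Hc | apply rt_step, Hadj].
    + intros [[|k] ->]; [rewrite npow1; apply rt_refl|].
      apply rt_step; rewrite <- (npow1 u) at 1; apply Npow_adj_npow_iff; auto; try lia.
      split; [lia | left; exists (S (S k)); lia].
  - intros i j; apply Npow_adj_npow_iff; auto; lia.
Qed.

Definition loop_pgraph : pgraph G := {|
  padj := @Npow_adj G;
  pinv := inv;
  punit := one G;
  padj_sym := Npow_adj_sym;
  padj_irrefl := fun x y H => proj1 H;
  pinvK := invK;
  padj_pinv := Npow_adj_inv;
  pinv_punit := inv_one;
  connected_pinv := fun x H =>
    proj1 (finite_order_iff_connected x) (commensurable_inv (connected_commensurable H));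
  padj_of_pinv := loop_padj_of_inv;
  punit_dominates := loop_punit_dominates;
  padj_no_twins := loop_padj_no_twins;
  dominated_component_model := loop_component_model |}.

Lemma is_pos_power_inv (x y : G) : is_pos_power (inv x) y <-> is_pos_power x (inv y).
Proof.
  split; intros (n & Hn & E); exists n; split; auto.
  - rewrite E, <- inv_npow, invK; reflexivity.
  - rewrite <- inv_npow, <- E, invK; reflexivity.
Qed.

Lemma is_nz_power_iff (x y : G) : is_nz_power x y <-> is_pos_power x y \/ is_pos_power (inv x) y.
Proof.
  assert (E : forall n, nnpow x n = npow (inv x) n) by (intros n; apply inv_npow).
  unfold is_nz_power, is_pos_power; setoid_rewrite E; firstorder.
Qed.

Lemma loop_zadj (x y : G) : zadj loop_pgraph x y <-> Zpow_adj x y.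
Proof.
  unfold zadj, Zpow_adj, cnbhd; simpl; unfold Npow_adj.
  rewrite !is_nz_power_iff, !is_pos_power_inv.
  split; intros [Hne H]; split; auto.
  - destruct H as [[_ H]|[E|[_ H]]]; [tauto | | tauto].
    left; right; exists 1; rewrite npow1; auto.
  - destruct (classic (x = inv y)); tauto.
Qed.

End PowerAssociativeLoop.

Theorem mainTheorem5 (G H : loop) :
  power_associative G -> power_associative H ->
  (graph_iso (@Npow_adj G) (@Npow_adj H) <-> graph_iso (@Zpow_adj G) (@Zpow_adj H)).
Proof.
  intros PG PH.
  pose proof (loop_zadj PG) as EG; pose proof (loop_zadj PH) as EH.
  split; intros Hiso.
  - apply (graph_iso_ext EG EH).
    exact (pgraph_zadj_iso_of_padj_iso (loop_pgraph PG) (loop_pgraph PH) Hiso).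
  - apply (pgraph_padj_iso_of_zadj_iso (P := loop_pgraph PG) (Q := loop_pgraph PH)).
    apply (graph_iso_ext (fun x y => iff_sym (EG x y)) (fun x y => iff_sym (EH x y)) Hiso).
Qed.
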